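(* Assume $\Sigma$ is already in a special coordinate basis (SCB) as in the context, with state $x=(x_a,x_b,x_c,x_d)$. Then there exists a nonsingular matrix $T_d\in\mathbb R^{n_d\times n_d}$ such that, with $T_s=\mathrm{diag}(I_{n_a},I_{n_b},I_{n_c},T_d)$ and the state transformation $x=T_s\bar x$, the transformed system is again in SCB (with the same $C_d$, $B_d$, $q_1,\dots,q_{m_d}$) and its matrix $F_{dd}$ has the following structure: partitioning the columns of $F_{dd}$ into consecutive blocks of widths $q_1,\dots,q_{m_d}$ and denoting by $f_{i,j,k}$ the entry of row $i$ in the $k$-th column of block $j$, one has $f_{i,j,k}=0$ whenever $j\ge i$ or $k=1$. Moreover, $C_dT_d=C_d$ and $T_d^{-1}B_d=B_d$.
   Context: Notation: for an integer $k\ge 1$, $J_k\in\mathbb R^{k\times k}$ is the matrix with ones on the first superdiagonal and zeros elsewhere, $B_k=[0\ \cdots\ 0\ 1]^\top\in\mathbb R^{k}$, $C_k=[1\ 0\ \cdots\ 0]\in\mathbb R^{1\times k}$, and $\mathrm{diag}(\cdot)$ denotes a (block) diagonal matrix. Consider the linear time-invariant system $\Sigma$: $\dot x=Ax+Bu$, $y=Cx+Du$, with $x\in\mathbb R^n$, $u\in\mathbb R^m$, $y\in\mathbb R^p$, $\operatorname{rank}D=m_0$, and with $[B^\top\ D^\top]$ and $[C\ D]$ of full rank. Special coordinate basis (SCB): $\Sigma$ is in SCB if its state, input and output are partitioned as $x=(x_a,x_b,x_c,x_d)$ with $x_a\in\mathbb R^{n_a},x_b\in\mathbb R^{n_b},x_c\in\mathbb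 R^{n_c},x_d\in\mathbb R^{n_d}$, $u=(u_0,u_d,u_c)$ with $u_0\in\mathbb R^{m_0},u_d\in\mathbb R^{m_d},u_c\in\mathbb R^{m_c}$, $y=(y_0,y_d,y_b)$ with $y_0\in\mathbb R^{m_0},y_d\in\mathbb R^{m_d},y_b\in\mathbb R^{p_b}$, such that $y_0=C_{0a}x_a+C_{0b}x_b+C_{0c}x_c+C_{0d}x_d+u_0$, $y_d=C_dx_d$, $y_b=C_bx_b$, $\dot x_a=A_ax_a+H_{ab}C_bx_b+H_{ad}C_dx_d+B_{0a}y_0$, $\dot x_b=A_bx_b+H_{bd}C_dx_d+B_{0b}y_0$, $\dot x_c=B_cF_{ca}x_a+H_{cb}C_bx_b+A_cx_c+H_{cd}C_dx_d+B_{0c}y_0+B_cu_c$, $\dot x_d=B_dF_{da}x_a+B_dF_{db}x_b+B_dF_{dc}x_c+A_dx_d+B_{0d}y_0+B_du_d$, with constant real matrices of appropriate dimensions, where $A_b=\mathrm{diag}(J_{l_1},\dots,J_{l_{p_b}})+H_{bb}C_b$, $C_b=\mathrm{diag}(C_{l_1},\dots,C_{l_{p_b}})$ for positive integers $l_i$ with $\sum_i l_i=n_b$; $B_d=\mathrm{diag}(B_{q_1},\dots,B_{q_{m_d}})$, $C_d=\mathrm{diag}(C_{q_1},\dots,C_{q_{m_d}})$ for integers $q_1\ge q_2\ge\dots\ge q_{m_d}\ge 1$ with $\sum_i q_i=n_d$; and $A_d=A_d^\star+B_dF_{dd}+H_{dd}C_d$ with $A_d^\star=\mathrm{diag}(J_{q_1},\dots,J_{q_{m_d}})$,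 $F_{dd}\in\mathbb R^{m_d\times n_d}$, $H_{dd}\in\mathbb R^{n_d\times m_d}$. *)

From mathcomp Require Import all_boot all_order all_algebra.
Set Implicit Arguments. Unset Strict Implicit. Unset Printing Implicit Defensive.
Import Order.TTheory GRing.Theory Num.Theory.
Local Open Scope ring_scope.

Section SCB.
Variable R : nzRingType.

Definition Jmx (k : nat) : 'M[R]_k := \matrix_(i, j) ((j : nat) == i.+1)%:R.

Definition bstart (r : nat) (s : 'I_r -> nat) (i : 'I_r) : nat :=
  (\sum_(j < r | (j < i)%N) s j)%N.

Definition Jblk (r : nat) (s : 'I_r -> nat) : 'M[R]_(\sum_i s i) :=
  \mxdiag_(i < r) Jmx (s i).

(* diag(B_{s_1}, ..., B_{s_r}) with B_k = [0 ... 0 1]^T, written entrywise: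
   entry (row c, column i) is 1 iff c is the last index of block i. *)
Definition Bblk (r : nat) (s : 'I_r -> nat) : 'M[R]_(\sum_i s i, r) :=
  \matrix_(c, i) (((c : nat).+1 == bstart s i + s i)%N)%:R.

(* diag(C_{s_1}, ..., C_{s_r}) with C_k = [1 0 ... 0], written entrywise:
   entry (row i, column c) is 1 iff c is the first index of block i. *)
Definition Cblk (r : nat) (s : 'I_r -> nat) : 'M[R]_(r, \sum_i s i) :=
  \matrix_(i, c) (((c : nat) == bstart s i)%N)%:R.

(* The free data of a system in special coordinate basis.
   x = (x_a, x_b, x_c, x_d), u = (u_0, u_d, u_c), y = (y_0, y_d, y_b),
   n_b = sum_i l_i, n_d = sum_i q_i. *)
Record scb_data (na nc m0 mc pb md : nat) (l : 'I_pb -> nat) (q : 'I_md -> nat)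
  := SCBData {
  Aa : 'M[R]_na; Hab : 'M[R]_(na, pb); Had : 'M[R]_(na, md); B0a : 'M[R]_(na, m0);
  Hbb : 'M[R]_(\sum_i l i, pb); Hbd : 'M[R]_(\sum_i l i, md);
  B0b : 'M[R]_(\sum_i l i, m0);
  Fca : 'M[R]_(mc, na); Hcb : 'M[R]_(nc, pb); Ac : 'M[R]_nc; Hcd : 'M[R]_(nc, md);
  B0c : 'M[R]_(nc, m0); Bc : 'M[R]_(nc, mc);
  Fda : 'M[R]_(md, na); Fdb : 'M[R]_(md, \sum_i l i); Fdc : 'M[R]_(md, nc);
  Fdd : 'M[R]_(md, \sum_i q i); Hdd : 'M[R]_(\sum_i q i, md);
  B0d : 'M[R]_(\sum_i q i, m0);
  C0a : 'M[R]_(m0, na); C0b : 'M[R]_(m0, \sum_i l i); C0c : 'M[R]_(m0, nc);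
  C0d : 'M[R]_(m0, \sum_i q i) }.

Definition col3 (a b c : nat) (xa : 'cV[R]_a) (xb : 'cV[R]_b) (xc : 'cV[R]_c)
  : 'cV[R]_(a + b + c) := col_mx (col_mx xa xb) xc.
Definition col4 (a b c d : nat) (xa : 'cV[R]_a) (xb : 'cV[R]_b) (xc : 'cV[R]_c)
  (xd : 'cV[R]_d) : 'cV[R]_(a + b + c + d) := col_mx (col3 xa xb xc) xd.

(* The system (A, B, C, D) (dx/dt = A x + B u, y = C x + D u) is in SCB with
   data P: the defining equations of the SCB hold for all x and u. *)
Definition in_SCB (na nc m0 mc pb md : nat) (l : 'I_pb -> nat) (q : 'I_md -> nat)
  (A : 'M[R]_(na + \sum_i l i + nc + \sum_i q i))
  (B : 'M[R]_(na + \sum_i l i + nc + \sum_i q i, m0 + md + mc))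
  (C : 'M[R]_(m0 + md + pb, na + \sum_i l i + nc + \sum_i q i))
  (D : 'M[R]_(m0 + md + pb, m0 + md + mc))
  (P : scb_data na nc m0 mc l q) : Prop :=
  let Cb := Cblk l in
  let Cd := Cblk q in
  let Bd := Bblk q in
  let Ab := Jblk l + Hbb P *m Cb in
  let Ad := Jblk q + Bd *m Fdd P + Hdd P *m Cd in
  forall (xa : 'cV[R]_na) (xb : 'cV[R]_(\sum_i l i)) (xc : 'cV[R]_nc)
         (xd : 'cV[R]_(\sum_i q i))
         (u0 : 'cV[R]_m0) (ud : 'cV[R]_md) (uc : 'cV[R]_mc),
  let x := col4 xa xb xc xd in
  let u := col3 u0 ud uc in
  let y0 := C0a P *m xa + C0b P *m xb + C0c P *m xc + C0d P *m xd + u0 in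
  C *m x + D *m u = col3 y0 (Cd *m xd) (Cb *m xb) /\
  A *m x + B *m u =
    col4 (Aa P *m xa + Hab P *m (Cb *m xb) + Had P *m (Cd *m xd) + B0a P *m y0)
         (Ab *m xb + Hbd P *m (Cd *m xd) + B0b P *m y0)
         (Bc P *m (Fca P *m xa) + Hcb P *m (Cb *m xb) + Ac P *m xc
            + Hcd P *m (Cd *m xd) + B0c P *m y0 + Bc P *m uc)
         (Bd *m (Fda P *m xa) + Bd *m (Fdb P *m xb) + Bd *m (Fdc P *m xc)
            + Ad *m xd + B0d P *m y0 + Bd *m ud).

Definition Ts_mx (na nb nc nd : nat) (Td : 'M[R]_nd) : 'M[R]_(na + nb + nc + nd) :=
  block_mx (block_mx (block_mx (1%:M : 'M[R]_na) 0 0 (1%:M : 'M[R]_nb))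
                     0 0 (1%:M : 'M[R]_nc)) 0 0 Td.

(* Structure of F_dd: entry f_{i,j,k} (row i, k-th column of column block j)
   vanishes whenever j >= i or k = 1 (0-based indices below). *)
Definition Fdd_structured (md : nat) (q : 'I_md -> nat) (F : 'M[R]_(md, \sum_i q i))
  : Prop :=
  forall (i j : 'I_md) (c : 'I_(\sum_i q i)),
    (bstart q j <= c < bstart q j + q j)%N ->
    ((j >= i)%N \/ (c : nat) = bstart q j) -> F i c = 0.

End SCB.

(* Let A_j = J + B_d F_(<=j), where F_(<=j) keeps only the rows i <= j of F_dd.
   The new basis of block j of x_d is the chain b_j, A_j b_j, ..., A_j^(q_j-1) b_j,
   listed bottom-up.  Within block j the transformed J + B_d F_dd then acts as the
   shift J, up to B_d times the rows i > j of F_dd T_d and to terms in the first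
   column of each block, which are absorbed into H_dd C_d.  Because q is
   nonincreasing, A_j^k b_j equals e_(j, q_j-1-k) plus entries lying strictly
   lower inside their blocks, so T_d is unipotent, agrees with the identity on
   the first row of every block (C_d T_d = C_d) and has b_j as the last column
   of block j (T_d B_d = B_d). *)

From mathcomp Require Import all_boot all_order all_algebra.
From mathcomp Require Import zify.
Set Implicit Arguments. Unset Strict Implicit. Unset Printing Implicit Defensive.
Import GRing.Theory Num.Theory.
Local Open Scope ring_scope.

Section BlockIndices.
Variables (md : nat) (q : 'I_md -> nat).
Local Notation n := (\sum_i q i)%N.

Definition blk (c : 'I_n) : 'I_md := tagnat.sig1 c.
Definition pos (c : 'I_n) : nat := tagnat.sig2 c.
Definition idx (j : 'I_md) (k : nat) (hk : (k < q j)%N) : 'I_n :=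
  @tagnat.Rank md q j (Ordinal hk).

Lemma pos_lt (c : 'I_n) : (pos c < q (blk c))%N.
Proof. exact: ltn_ord. Qed.

Lemma blk_idx j k hk : blk (@idx j k hk) = j.
Proof. exact: tagnat.Rank1K. Qed.

Lemma pos_idx j k hk : pos (@idx j k hk) = k.
Proof. by rewrite /pos /idx tagnat.Rank2K. Qed.

Lemma idx_val j k hk : (@idx j k hk : nat) = (bstart q j + k)%N.
Proof. by rewrite /idx tagnat.RankEsum. Qed.

Lemma bstart_pos (c : 'I_n) : (c : nat) = (bstart q (blk c) + pos c)%N.
Proof. exact: tagnat.rect. Qed.

Lemma eq_blk_pos (c c' : 'I_n) : (c == c') = (blk c == blk c') && (pos c == pos c').
Proof.
rewrite -val_eqE /blk /pos -[c in LHS]tagnat.sig2K -[c' in LHS]tagnat.sig2K.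
exact: tagnat.eq_Rank.
Qed.

Lemma idxE j k hk (c : 'I_n) : blk c = j -> pos c = k -> @idx j k hk = c.
Proof. by move=> bc pc; apply/eqP; rewrite eq_blk_pos blk_idx pos_idx bc pc !eqxx. Qed.

Lemma in_block j (c : 'I_n) : (bstart q j <= c < bstart q j + q j)%N ->
  blk c = j /\ pos c = (c - bstart q j)%N.
Proof.
move=> /andP[lo hi]; have hk : (c - bstart q j < q j)%N by lia.
have e : @idx j _ hk = c by apply: ord_inj; rewrite idx_val; lia.
by split; [rewrite -e blk_idx | rewrite -[in LHS]e pos_idx].
Qed.

Hypothesis q_gt0 : forall i, (0 < q i)%N.

Definition first_idx i : 'I_n := idx (q_gt0 i).

Lemma last_lt i : ((q i).-1 < q i)%N.
Proof. by rewrite prednK. Qed.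

Definition last_idx i : 'I_n := idx (last_lt i).

End BlockIndices.

Lemma sum_mulrnb (V : nmodType) (I : finType) (P : pred I) (f : I -> V) :
  \sum_i f i *+ P i = \sum_(i | P i) f i.
Proof. by rewrite [RHS]big_mkcond; apply: eq_bigr => i _; rewrite mulrb. Qed.

Section BlockEntries.
Variables (R : nzRingType) (md : nat) (q : 'I_md -> nat).
Hypothesis q_gt0 : forall i, (0 < q i)%N.
Local Notation n := (\sum_i q i)%N.
Local Notation J := (Jblk R q).
Local Notation Bd := (Bblk R q).
Local Notation Cd := (Cblk R q).

Lemma JblkE (s t : 'I_n) :
  J s t = ((blk s == blk t) && (pos t == (pos s).+1))%:R.
Proof.
rewrite /Jblk /mxdiag /mxblock !mxE /blk /pos /tagnat.sig1 /tagnat.sig2.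
case: (tagnat.sig s) (tagnat.sig t) => [i a] [i' b] /=.
case: eqVneq => [e|_]; last by rewrite mxE.
by subst i'; rewrite conform_mx_id /Jmx mxE.
Qed.

Lemma CblkE i (c : 'I_n) : Cd i c = ((blk c == i) && (pos c == 0%N))%:R.
Proof.
rewrite /Cblk mxE; congr (nat_of_bool _)%:R.
apply/idP/idP => [/eqP ci | /andP[/eqP <- /eqP p0]].
  have [] := @in_block _ _ i c; first by have := q_gt0 i; lia.
  by move=> -> ->; rewrite ci subnn !eqxx.
by rewrite [c in c == _]bstart_pos p0 addn0.
Qed.

Lemma BblkE (c : 'I_n) i : Bd c i = ((blk c == i) && ((pos c).+1 == q i))%:R.
Proof.
rewrite /Bblk mxE; congr (nat_of_bool _)%:R.
apply/idP/idP => [/eqP ci | /andP[/eqP <- /eqP pc]].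
  have [] := @in_block _ _ i c; first by have := q_gt0 i; lia.
  move=> bc _; rewrite bc eqxx /=; apply/eqP.
  by move: ci; rewrite [in LHS]bstart_pos bc -addnS => /addnI.
by rewrite [c in c.+1 == _]bstart_pos -pc addnS.
Qed.

Lemma mul_Jblk_succ p (M : 'M[R]_(n, p)) r t (h : ((pos r).+1 < q (blk r))%N) :
  (J *m M) r t = M (idx h) t.
Proof.
rewrite mxE (eq_bigr (fun s => M s t *+ (s == idx h))) => [|s _].
  by rewrite sum_mulrnb big_pred1_eq.
by rewrite JblkE mulr_natl eq_blk_pos blk_idx pos_idx [blk s == _]eq_sym.
Qed.

Lemma mul_Jblk_last p (M : 'M[R]_(n, p)) r t :
  (pos r).+1 = q (blk r) -> (J *m M) r t = 0.
Proof.
move=> pr; rewrite mxE big1 // => s _; rewrite JblkE.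
case: eqP => [bs|]; last by rewrite mul0r.
by case: eqP => [ps|]; [have := pos_lt s; rewrite ps -bs pr ltnn | rewrite mul0r].
Qed.

Lemma mulmx_Jblk_pred p (M : 'M[R]_(p, n)) r c (h : ((pos c).-1 < q (blk c))%N) :
  (0 < pos c)%N -> (M *m J) r c = M r (idx h).
Proof.
move=> pc; rewrite mxE (eq_bigr (fun s => M r s *+ (s == idx h))) => [|s _].
  by rewrite sum_mulrnb big_pred1_eq.
rewrite JblkE mulr_natr eq_blk_pos blk_idx pos_idx.
by congr (_ *+ (_ && _)); apply/eqP/eqP => [-> // | ->]; rewrite prednK.
Qed.

Lemma mul_Cblk p (X : 'M[R]_(n, p)) i t : (Cd *m X) i t = X (first_idx q_gt0 i) t.
Proof.
rewrite mxE (eq_bigr (fun s => X s t *+ (s == first_idx q_gt0 i))) => [|s _].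
  by rewrite sum_mulrnb big_pred1_eq.
by rewrite CblkE mulr_natl eq_blk_pos blk_idx pos_idx.
Qed.

Lemma mulmx_Cblk p (X : 'M[R]_(p, md)) r t :
  (X *m Cd) r t = X r (blk t) *+ (pos t == 0%N).
Proof.
rewrite mxE (eq_bigr (fun i => X r i *+ ((i == blk t) && (pos t == 0%N)))) => [|i _].
  case: (pos t == 0%N); last by rewrite big1 // => i _; rewrite andbF.
  by under eq_bigr do rewrite andbT; rewrite sum_mulrnb big_pred1_eq.
by rewrite CblkE mulr_natr [blk t == _]eq_sym.
Qed.

Lemma mul_Bblk p (Y : 'M[R]_(md, p)) r t :
  (Bd *m Y) r t = Y (blk r) t *+ ((pos r).+1 == q (blk r)).
Proof.
rewrite mxE (eq_bigr (fun i => Y i t *+ ((i == blk r) && ((pos r).+1 == q (blk r))))).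
  case: (_ == _); last by rewrite big1 // => i _; rewrite andbF.
  by under eq_bigr do rewrite andbT; rewrite sum_mulrnb big_pred1_eq.
move=> i _; rewrite BblkE mulr_natl [blk r == _]eq_sym.
by case: eqP => // ->.
Qed.

Lemma mulmx_Bblk p (X : 'M[R]_(p, n)) r i : (X *m Bd) r i = X r (last_idx q_gt0 i).
Proof.
rewrite mxE (eq_bigr (fun c => X r c *+ (c == last_idx q_gt0 i))) => [|c _].
  by rewrite sum_mulrnb big_pred1_eq.
rewrite BblkE mulr_natr eq_blk_pos blk_idx pos_idx.
by congr (_ *+ (_ && _)); apply/eqP/eqP => [<- // | ->]; rewrite prednK.
Qed.

Lemma mulmx_trCblk p (X : 'M[R]_(p, n)) r i :
  (X *m Cd^T) r i = X r (first_idx q_gt0 i).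
Proof.
rewrite mxE (eq_bigr (fun c => X r c *+ (c == first_idx q_gt0 i))) => [|c _].
  by rewrite sum_mulrnb big_pred1_eq.
by rewrite mxE CblkE mulr_natr eq_blk_pos blk_idx pos_idx.
Qed.

Lemma mulmx_trCblk_Cblk p (X : 'M[R]_(p, n)) :
  (forall r t, (0 < pos t)%N -> X r t = 0) -> X *m Cd^T *m Cd = X.
Proof.
move=> X0; apply/matrixP => r t; rewrite mulmx_Cblk mulmx_trCblk.
case: eqP => [p0 | /eqP pt]; first by rewrite /first_idx (idxE (q_gt0 _) erefl p0).
by rewrite mulr0n X0 // lt0n.
Qed.

End BlockEntries.

Arguments JblkE {R md q}.
Arguments CblkE {R md q}.
Arguments BblkE {R md q}.

Section ChainBasis.
Variables (R : nzRingType) (md : nat) (q : 'I_md -> nat).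
Hypothesis q_gt0 : forall i, (0 < q i)%N.
Hypothesis q_noninc : forall i j : 'I_md, (i <= j)%N -> (q j <= q i)%N.
Local Notation n := (\sum_i q i)%N.
Local Notation J := (Jblk R q).
Local Notation Bd := (Bblk R q).
Local Notation Cd := (Cblk R q).
Variable F : 'M[R]_(md, n).

Definition Fupto (j : 'I_md) : 'M[R]_(md, n) := \matrix_(i, c) (F i c *+ (i <= j)%N).

Lemma mul_Fupto j p (M : 'M[R]_(n, p)) i t :
  (Fupto j *m M) i t = (F *m M) i t *+ (i <= j)%N.
Proof.
by rewrite !mxE -sumrMnl; apply: eq_bigr => c _; rewrite mxE mulrnAl.
Qed.

Definition Aupto (j : 'I_md) : 'M[R]_n := J + Bd *m Fupto j.

(* J moves entries up one position inside each block, while B_d F_(<=j) only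
   writes into the last row of blocks i <= j, at position q_i - 1 >= q_j - 1. *)
Lemma chain_entry (j : 'I_md) k (r : 'I_n) :
  ~~ ((blk r <= j)%N && ((q j).-1 < pos r + k)%N) ->
  (Aupto j ^+ k *m Bd) r j = ((blk r == j) && (pos r + k == (q j).-1)%N)%:R.
Proof.
elim: k r => [|k IHk] r.
  move=> _; rewrite expr0 mul1mx (BblkE q_gt0); congr (nat_of_bool (_ && _))%:R.
  by have := q_gt0 j; case: eqP; case: eqP; lia.
rewrite exprS -mulmxE -mulmxA mulmxDl mxE -mulmxA (mul_Bblk q_gt0) => hyp.
have := pos_lt r; case: (ltnP (pos r).+1 (q (blk r))) => [h | ge] lt.
  rewrite mul_Jblk_succ (_ : (_ == _) = false) ?mulr0n ?addr0; last by lia.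
  by rewrite IHk blk_idx pos_idx addSnnS.
have last_r : (pos r).+1 = q (blk r) by lia.
rewrite mul_Jblk_last // add0r.
have lt_j : (j < blk r)%N.
  rewrite ltnNge; apply/negP => le_r; have := q_noninc le_r.
  by move: hyp; rewrite le_r /=; lia.
rewrite mul_Fupto leqNgt lt_j mulr0n mul0rn.
by rewrite (_ : (blk r == j) = false) //; apply/negbTE; rewrite neq_ltn lt_j orbT.
Qed.

Definition Tchain : 'M[R]_n :=
  \matrix_(r, c) (Aupto (blk c) ^+ ((q (blk c)).-1 - pos c) *m Bd) r (blk c).

Lemma TchainE (r c : 'I_n) : ~~ ((blk r <= blk c)%N && (pos c < pos r)%N) ->
  Tchain r c = (r == c)%:R.
Proof.
move=> hyp; rewrite mxE chain_entry; last first.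
  by move: hyp; apply: contra => /andP[-> /=]; have := pos_lt c; lia.
rewrite eq_blk_pos; congr (nat_of_bool (_ && _))%:R.
by have := pos_lt c; case: eqP; case: eqP; lia.
Qed.

Lemma Tchain_last i (r : 'I_n) : Tchain r (last_idx q_gt0 i) = Bd r i.
Proof. by rewrite mxE blk_idx pos_idx subnn expr0 mul1mx. Qed.

Lemma Tchain_pred (r c : 'I_n) (h : ((pos c).-1 < q (blk c))%N) :
  (0 < pos c)%N -> Tchain r (idx h) = (Aupto (blk c) *m Tchain) r c.
Proof.
move=> pc; rewrite mxE blk_idx pos_idx.
have -> : ((q (blk c)).-1 - (pos c).-1 = ((q (blk c)).-1 - pos c).+1)%N.
  by have := pos_lt c; lia.
rewrite exprS -mulmxE -mulmxA [RHS]mxE [LHS]mxE; apply: eq_bigr => s _.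
by rewrite [Tchain s c]mxE.
Qed.

Lemma Cblk_Tchain : Cd *m Tchain = Cd.
Proof.
apply/matrixP => i c; rewrite (mul_Cblk q_gt0) TchainE; last first.
  by rewrite pos_idx ltn0 andbF.
by rewrite (CblkE q_gt0) eq_blk_pos blk_idx pos_idx [i == _]eq_sym [0%N == _]eq_sym.
Qed.

Lemma Tchain_Bblk : Tchain *m Bd = Bd.
Proof. by apply/matrixP => r i; rewrite mulmx_Bblk Tchain_last. Qed.

Lemma Tchain_sub1_expr m (r c : 'I_n) :
  (pos r < pos c + m)%N -> ((Tchain - 1%:M) ^+ m) r c = 0.
Proof.
have below r' s : ~~ (pos s < pos r')%N -> (Tchain - 1%:M) r' s = 0.
  move=> h; rewrite mxE [X in _ + X]mxE [X in _ - X]mxE.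
  by rewrite TchainE ?subrr // negb_and h orbT.
elim: m r c => [|m IHm] r c.
  by rewrite addn0 expr0 mxE; case: eqVneq => // ->; rewrite ltnn.
move=> lt_rc; rewrite exprS -mulmxE mxE big1 // => s _.
case: (ltnP (pos s) (pos r)) => [lt_sr | le_rs]; last by rewrite below ?mul0r // -leqNgt.
by rewrite IHm ?mulr0 //; lia.
Qed.

Lemma Tchain_sub1_nilpotent : (Tchain - 1%:M) ^+ n = 0.
Proof.
apply/matrixP => r c; rewrite Tchain_sub1_expr ?mxE //.
by have := ltn_ord r; rewrite [X in (X < _)%N -> _]bstart_pos; lia.
Qed.

Definition Fstruct : 'M[R]_(md, n) :=
  \matrix_(i, c) ((F *m Tchain) i c *+ ((0 < pos c)%N && (blk c < i)%N)).

Lemma Fstruct_structured : Fdd_structured Fstruct.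
Proof.
move=> i j c /in_block[bc pc] [le_ij | cj]; rewrite mxE bc.
  by rewrite [(j < i)%N]ltnNge le_ij andbF.
by rewrite pc cj subnn.
Qed.

Lemma F_Tchain_split i c : (0 < pos c)%N ->
  (F *m Tchain) i c = (Fupto (blk c) *m Tchain) i c + Fstruct i c.
Proof.
move=> pc; rewrite mul_Fupto [Fstruct _ _]mxE pc /=.
by case: leqP; rewrite ?addr0 ?add0r.
Qed.

Lemma Tchain_shift r c : (0 < pos c)%N ->
  ((J + Bd *m F) *m Tchain) r c = (Tchain *m J) r c + (Bd *m Fstruct) r c.
Proof.
move=> pc; have h : ((pos c).-1 < q (blk c))%N by have := pos_lt c; lia.
rewrite (mulmx_Jblk_pred _ _ h pc) (Tchain_pred _ h pc) /Aupto !mulmxDl.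
rewrite [LHS]mxE [X in _ = X + _]mxE -addrA -!mulmxA !(mul_Bblk q_gt0) -mulrnDl.
by rewrite (F_Tchain_split _ pc).
Qed.

End ChainBasis.

Lemma unitmx_unipotent (R : comUnitRingType) n (A : 'M[R]_n) m :
  (A - 1%:M) ^+ m = 0 -> A \in unitmx.
Proof.
move=> nilA; have := subrX1 (1%:M - A) m.
have -> : (1%:M - A) ^+ m = 0 by rewrite -opprB exprNn nilA mulr0.
rewrite sub0r [1%:M - A - _]addrAC subrr add0r mulNr => /oppr_inj/esym.
by case/mulmx1_unit.
Qed.

Section ChainSimilarity.
Variables (R : comUnitRingType) (md : nat) (q : 'I_md -> nat).
Hypothesis q_gt0 : forall i, (0 < q i)%N.
Hypothesis q_noninc : forall i j : 'I_md, (i <= j)%N -> (q j <= q i)%N.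
Local Notation n := (\sum_i q i)%N.
Local Notation J := (Jblk R q).
Local Notation Bd := (Bblk R q).
Local Notation Cd := (Cblk R q).
Variables (F : 'M[R]_(md, n)) (H : 'M[R]_(n, md)).
Local Notation T := (Tchain F).

Lemma Tchain_unit : T \in unitmx.
Proof. exact: unitmx_unipotent (Tchain_sub1_nilpotent q_gt0 q_noninc F). Qed.

Lemma invmx_Tchain_Bblk : invmx T *m Bd = Bd.
Proof. by rewrite -{1}(Tchain_Bblk q_gt0 F) mulKmx // Tchain_unit. Qed.

Definition Hstruct : 'M[R]_(n, md) :=
  (invmx T *m (J + Bd *m F + H *m Cd) *m T - J - Bd *m Fstruct F) *m Cd^T.

Lemma Tchain_similar :
  invmx T *m (J + Bd *m F + H *m Cd) *m T = J + Bd *m Fstruct F + Hstruct *m Cd.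
Proof.
set X := invmx T *m _ *m T.
have sub_entry (A B : 'M[R]_n) i j : (A - B) i j = A i j - B i j by rewrite !mxE.
have residual_start r t : (0 < pos t)%N -> (X - J - Bd *m Fstruct F) r t = 0.
  move=> pt.
  have -> : X - J - Bd *m Fstruct F
            = invmx T *m ((J + Bd *m F + H *m Cd) *m T - T *m J - Bd *m Fstruct F).
    by rewrite !mulmxBr !mulmxA mulVmx ?Tchain_unit // mul1mx invmx_Tchain_Bblk.
  rewrite mxE big1 // => s _.
  rewrite mulmxDl -mulmxA (Cblk_Tchain q_gt0 q_noninc) !sub_entry mxE.
  rewrite (mulmx_Cblk q_gt0) (_ : (pos t == 0%N) = false) ?mulr0n ?addr0; last first.
    by case: (pos t) pt.
  by rewrite (Tchain_shift q_gt0 F) // (addrC (_ s t)) addrK subrr mulr0.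
rewrite /Hstruct (mulmx_trCblk_Cblk q_gt0) //.
by rewrite -[X - J - _]addrA -opprD [RHS]addrC subrK.
Qed.

End ChainSimilarity.

Section StateTransformation.
Variables (R : comUnitRingType) (na nb nc nd : nat).
Local Notation Ts := (Ts_mx na nb nc).

Lemma mulmx_Ts (T1 T2 : 'M[R]_nd) : Ts T1 *m Ts T2 = Ts (T1 *m T2).
Proof. by rewrite /Ts_mx !mulmx_block !mulmx1 !mul1mx !mulmx0 !mul0mx !addr0 !add0r. Qed.

Lemma Ts_mx1 : Ts (1%:M : 'M[R]_nd) = 1%:M.
Proof. by rewrite /Ts_mx -!scalar_mx_block. Qed.

Lemma invmx_Ts (T : 'M[R]_nd) : T \in unitmx -> invmx (Ts T) = Ts (invmx T).
Proof.
move=> Tu; have TsV : Ts T *m Ts (invmx T) = 1%:M by rewrite mulmx_Ts mulmxV // Ts_mx1.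
by rewrite -[RHS](mulKmx (proj1 (mulmx1_unit TsV))) TsV mulmx1.
Qed.

Lemma mul_Ts_col4 (T : 'M[R]_nd) xa xb xc (xd : 'cV[R]_nd) :
  Ts T *m col4 xa xb xc xd = col4 xa xb xc (T *m xd) :> 'cV[R]_(na + nb + nc + nd).
Proof. by rewrite /Ts_mx /col4 /col3 !mul_block_col !mul1mx !mul0mx !addr0 !add0r. Qed.

End StateTransformation.

Section SCBTransport.
Variables (R : comUnitRingType) (na nc m0 mc pb md : nat).
Variables (l : 'I_pb -> nat) (q : 'I_md -> nat).
Local Notation nb := (\sum_i l i)%N.
Local Notation nd := (\sum_i q i)%N.
Local Notation J := (Jblk R q).
Local Notation Bd := (Bblk R q).
Local Notation Cd := (Cblk R q).

Definition scb_with_d (P : scb_data R na nc m0 mc l q)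
    (F : 'M[R]_(md, nd)) (H : 'M[R]_(nd, md)) (B0 : 'M[R]_(nd, m0))
    (C0 : 'M[R]_(m0, nd)) : scb_data R na nc m0 mc l q :=
  SCBData (Aa P) (Hab P) (Had P) (B0a P) (Hbb P) (Hbd P) (B0b P) (Fca P) (Hcb P)
    (Ac P) (Hcd P) (B0c P) (Bc P) (Fda P) (Fdb P) (Fdc P) F H B0
    (C0a P) (C0b P) (C0c P) C0.

Lemma in_SCB_Ts A B C D (P : scb_data R na nc m0 mc l q) (Td : 'M[R]_nd) F H :
  Td \in unitmx -> Cd *m Td = Cd -> invmx Td *m Bd = Bd ->
  invmx Td *m (J + Bd *m Fdd P + Hdd P *m Cd) *m Td = J + Bd *m F + H *m Cd ->
  in_SCB A B C D P ->
  let Ts := Ts_mx na nb nc Td in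
  in_SCB (invmx Ts *m A *m Ts) (invmx Ts *m B) (C *m Ts) D
    (scb_with_d P F H (invmx Td *m B0d P) (C0d P *m Td)).
Proof.
move=> Tu CdT TBd sim scbP Ts; rewrite /in_SCB /= => xa xb xc xd u0 ud uc.
have [out dyn] := scbP xa xb xc (Td *m xd) u0 ud uc.
rewrite /= (mulmxA Cd) CdT (mulmxA (C0d P)) in out dyn.
split; first by rewrite -mulmxA mul_Ts_col4 out.
rewrite -(mulmxA (invmx Ts *m A)) mul_Ts_col4 -(mulmxA (invmx Ts) A).
rewrite -(mulmxA (invmx Ts) B) -[LHS]mulmxDr dyn invmx_Ts // mul_Ts_col4.
by congr col4; rewrite !mulmxDr !mulmxA TBd sim.
Qed.

End SCBTransport.

Theorem lemma2 (R : realFieldType) (na nc m0 mc pb md : nat)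
  (l : 'I_pb -> nat) (q : 'I_md -> nat)
  (A : 'M[R]_(na + \sum_i l i + nc + \sum_i q i))
  (B : 'M[R]_(na + \sum_i l i + nc + \sum_i q i, m0 + md + mc))
  (C : 'M[R]_(m0 + md + pb, na + \sum_i l i + nc + \sum_i q i))
  (D : 'M[R]_(m0 + md + pb, m0 + md + mc))
  (P : scb_data R na nc m0 mc l q) :
  (forall i, (0 < l i)%N) ->
  (forall i, (0 < q i)%N) ->
  (forall i j : 'I_md, (i <= j)%N -> (q j <= q i)%N) ->
  \rank D = m0 ->
  \rank (col_mx B D) = (m0 + md + mc)%N ->
  \rank (row_mx C D) = (m0 + md + pb)%N ->
  in_SCB A B C D P ->
  exists Td : 'M[R]_(\sum_i q i),
    [/\ Td \in unitmx,
        (let Ts := Ts_mx na (\sum_i l i) nc Td in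
         exists P' : scb_data R na nc m0 mc l q,
           in_SCB (invmx Ts *m A *m Ts) (invmx Ts *m B) (C *m Ts) D P'
           /\ Fdd_structured (Fdd P')),
        Cblk R q *m Td = Cblk R q
      & invmx Td *m Bblk R q = Bblk R q].
Proof.
(* Only the x_d-subsystem is transformed: neither l nor the rank conditions matter. *)
move=> _ q_gt0 q_noninc _ _ _ scbP.
set F := Fdd P; set Td := Tchain F.
have Tu : Td \in unitmx := Tchain_unit q_gt0 q_noninc F.
have CdT : Cblk R q *m Td = Cblk R q := Cblk_Tchain q_gt0 q_noninc F.
have TBd : invmx Td *m Bblk R q = Bblk R q := invmx_Tchain_Bblk q_gt0 q_noninc F.
exists Td; split => //.
exists (scb_with_d P (Fstruct F) (Hstruct F (Hdd P)) (invmx Td *m B0d P) (C0d P *m Td)).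
split; last exact: Fstruct_structured.
exact: in_SCB_Ts Tu CdT TBd (Tchain_similar q_gt0 q_noninc F (Hdd P)) scbP.
Qed.
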